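(* Let $v\ge2$. Then an optimum $(d,3)$-CDA$((d+1)v^3;4,v)$ exists for every positive integer $d$ with $d+1\le v$.
   Context: Consecutive $t$-way interaction in an $N\times k$ array $A=(a_{ij})$ over a $v$-set $V$: $T=\{(i,x_i),\dots,(i+t-1,x_{i+t-1})\}$, $1\le i\le k-t+1$, $x_r\in V$; $\rho(A,T)=\{r: a_{r,j}=x_j\ \forall (j,x_j)\in T\}$, $\rho(A,\mathcal T)=\bigcup_{T\in\mathcal T}\rho(A,T)$. A $(d,t)$-CDA$(N;k,v)$ is an $N\times k$ array over $V$ in which every $t$ consecutive columns contain every $t$-tuple at least once, and such that for every set $\mathcal T$ of exactly $d$ distinct consecutive $t$-way interactions and every consecutive $t$-way interaction $T$: $\rho(A,T)\subseteq\rho(A,\mathcal T)$ iff $T\in\mathcal T$. It is optimum if $N=(d+1)v^t$. *)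

From mathcomp Require Import all_boot all_order all_algebra.
Set Implicit Arguments. Unset Strict Implicit. Unset Printing Implicit Defensive.

(* An N x k array over the v-set V = 'I_v is a matrix 'M['I_v]_(N,k);
   rows and columns are 0-indexed. *)

(* A consecutive t-way interaction: a start column i (0-indexed, i + t <= k,
   i.e. i : 'I_(k - t + 1) when t <= k) together with the values x_0..x_{t-1}
   placed in columns i, ..., i+t-1. *)
Definition cinter (k t v : nat) : finType :=
  ('I_(k - t + 1) * {ffun 'I_t -> 'I_v})%type.

Definition covers (N k t v : nat) (A : 'M['I_v]_(N, k)) (r : 'I_N)
  (T : cinter k t v) : bool :=
  [forall j : 'I_t, forall c : 'I_k,
     (val c == val T.1 + val j) ==> (A r c == T.2 j)].

Definition rho (N k t v : nat) (A : 'M['I_v]_(N, k)) (T : cinter k t v)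
  : {set 'I_N} := [set r | covers A r T].

Definition rhoS (N k t v : nat) (A : 'M['I_v]_(N, k)) (S : {set cinter k t v})
  : {set 'I_N} := \bigcup_(T in S) rho A T.

Definition is_CDA (d t N k v : nat) (A : 'M['I_v]_(N, k)) : Prop :=
  t <= k /\
  (forall T : cinter k t v, rho A T != set0) /\
  (forall (S : {set cinter k t v}) (T : cinter k t v),
     #|S| = d -> ((rho A T \subset rhoS A S) <-> T \in S)).

Definition is_optimum_CDA (d t N k v : nat) (A : 'M['I_v]_(N, k)) : Prop :=
  is_CDA d t A /\ N = (d + 1) * v ^ t.

From mathcomp Require Import all_boot all_order all_algebra zify.
Set Implicit Arguments. Unset Strict Implicit.

(* Counting criterion: if every consecutive t-way interaction T is covered by
   more than d rows and two distinct interactions share at most one row, then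
   A is a (d,t)-CDA.  Indeed, if T is outside a d-set S and rho(T) is inside
   rho(S), then rho(T) is the union over T' in S of rho(T) with rho(T'), a set
   of at most d rows.

   With t + 1 columns, distinct interactions covered by a common row have
   different start columns (0 and 1), so together they fix the whole row;
   hence if all rows are distinct, two interactions share at most one row.

   Construction: for d + 1 <= v, take the (d+1) v^3 rows (a0, a1, a2, a0 + s)
   with s < d + 1 and arithmetic mod v.  The rows are distinct, and each
   3-way interaction is covered by one row for each shift s. *)

Lemma card_bigcup_le (I T : finType) (P : {pred I}) (F : I -> {set T}) :
  #|\bigcup_(i in P) F i| <= \sum_(i in P) #|F i|.
Proof.
elim/big_rec2: _ => [|i n U _ leUn]; first by rewrite cards0.
by rewrite (leq_trans (leq_card_setU _ U).1) ?leq_add2l.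
Qed.

Section Covering.
Variables (N k t v : nat) (A : 'M['I_v]_(N, k)).

Lemma covers_at r (T : cinter k t v) (c : 'I_k) (j : 'I_t) :
  covers A r T -> val c = T.1 + j -> A r c = T.2 j.
Proof. by move/forallP/(_ j)/forallP/(_ c)/implyP => H Hc; apply/eqP/H/eqP. Qed.

Lemma covers_same_start r (i : 'I_(k - t + 1)) (x y : {ffun 'I_t -> 'I_v}) :
  t <= k -> covers A r (i, x) -> covers A r (i, y) -> x = y.
Proof.
move=> t_le_k cx cy; apply/ffunP => j.
have ij_lt_k : i + j < k by move: (ltn_ord i) (ltn_ord j); lia.
by rewrite -(covers_at (c := Ordinal ij_lt_k) (j := j) cx) // (covers_at (j := j) cy).
Qed.

Lemma cda_of_covering_numbers d :
  t <= k ->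
  (forall T : cinter k t v, d < #|rho A T|) ->
  (forall T T' : cinter k t v, T != T' -> #|rho A T :&: rho A T'| <= 1) ->
  is_CDA d t A.
Proof.
move=> t_le_k big_rho small_overlap; split=> //; split.
  by move=> T; rewrite -card_gt0; apply: leq_ltn_trans (big_rho T).
move=> S T cardS; split; last by move=> TS; apply: bigcup_sup.
move=> rhoT_sub; apply/negPn/negP => T_notin_S.
have : #|rho A T| <= d.
  have rhoT_split : rho A T \subset \bigcup_(T' in S) (rho A T :&: rho A T').
    apply/subsetP => r rT; have /bigcupP[T' T'S rT'] := subsetP rhoT_sub r rT.
    by apply/bigcupP; exists T'; rewrite // inE rT.
  apply: leq_trans (subset_leq_card rhoT_split) _.
  apply: leq_trans (card_bigcup_le S _) _.
  rewrite -cardS -sum1_card; apply: leq_sum => T' T'S.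
  by apply: small_overlap; apply: contraNneq T_notin_S => ->.
by rewrite leqNgt big_rho.
Qed.

End Covering.

Lemma two_starts_cover t (i i' : 'I_(t.+1 - t + 1)) (c : 'I_t.+1) :
  0 < t -> i != i' ->
  (exists j : 'I_t, nat_of_ord c = i + j) \/ (exists j : 'I_t, nat_of_ord c = i' + j).
Proof.
move=> t_gt0 /eqP ii'.
have start_le1 (s : 'I_(t.+1 - t + 1)) : s <= 1 by have := ltn_ord s; lia.
have at_start (s : 'I_(t.+1 - t + 1)) :
    s <= c -> c < s + t -> exists j : 'I_t, nat_of_ord c = s + j.
  move=> sc cst; have cs_lt : c - s < t by lia.
  by exists (Ordinal cs_lt); rewrite /= subnKC.
have i_ne : nat_of_ord i <> i' by move=> /val_inj.
have := start_le1 i; have := start_le1 i'; have := ltn_ord c.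
case: (ltnP c t) => ct c_lt i'_le1 i_le1.
- case: (nat_of_ord i =P 0) => i0; [left | right]; apply: at_start; lia.
- case: (nat_of_ord i =P 1) => i1; [left | right]; apply: at_start; lia.
Qed.

Section OneMoreColumn.
Variables (N t v : nat) (A : 'M['I_v]_(N, t.+1)).
Hypothesis t_gt0 : 0 < t.
Hypothesis rows_distinct : forall r1 r2 : 'I_N, (forall c, A r1 c = A r2 c) -> r1 = r2.

Lemma rows_covering_two_agree r1 r2 (T T' : cinter t.+1 t v) :
  T != T' -> covers A r1 T -> covers A r1 T' -> covers A r2 T -> covers A r2 T' ->
  r1 = r2.
Proof.
move=> TT' c1 c1' c2 c2'; apply: rows_distinct => c.
have starts_differ : T.1 != T'.1.
  apply: contra TT'; case: T T' c1 c1' {c2 c2'} => [i x] [i' y] /= c1 c1' /eqP ii'.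
  by move: c1'; rewrite -ii' => c1'; rewrite (covers_same_start (leqnSn t) c1 c1').
have [[j cj] | [j cj]] := two_starts_cover c t_gt0 starts_differ.
- by rewrite (covers_at c1 cj) (covers_at c2 cj).
- by rewrite (covers_at c1' cj) (covers_at c2' cj).
Qed.

Lemma rho_overlap_le1 (T T' : cinter t.+1 t v) :
  T != T' -> #|rho A T :&: rho A T'| <= 1.
Proof.
move=> TT'; apply/card_le1_eqP => r1 r2; rewrite !inE => /andP[c1 c1'] /andP[c2 c2'].
exact: rows_covering_two_agree TT' c2 c2' c1 c1'.
Qed.

End OneMoreColumn.

Section Construction.
Variables (v d : nat).
Hypothesis d_lt_v : d + 1 <= v.

(* Rows are labelled by (s, a0, a1, a2), listed in the enumeration order. *)
Definition label : finType := ('I_(d + 1) * 'I_v * 'I_v * 'I_v)%type.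

Lemma card_label : #|{: label}| = (d + 1) * v ^ 3.
Proof. by rewrite !card_prod !card_ord !expnS expn0 muln1 !mulnA. Qed.

Definition label_of_row (r : 'I_((d + 1) * v ^ 3)) : label :=
  enum_val (cast_ord (esym card_label) r).
Definition row_of_label (p : label) : 'I_((d + 1) * v ^ 3) :=
  cast_ord card_label (enum_rank p).

Lemma row_of_labelK : cancel row_of_label label_of_row.
Proof. by move=> p; rewrite /label_of_row /row_of_label cast_ordK enum_rankK. Qed.

Lemma label_of_row_inj : injective label_of_row.
Proof. by move=> r1 r2 /enum_val_inj /cast_ord_inj. Qed.

Definition add_mod (a : 'I_v) (s : nat) : 'I_v :=
  Ordinal (ltn_pmod (a + s) (leq_ltn_trans (leq0n a) (ltn_ord a))).
Definition sub_mod (a : 'I_v) (s : nat) : 'I_v :=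
  Ordinal (ltn_pmod (a + v - s) (leq_ltn_trans (leq0n a) (ltn_ord a))).

Lemma sub_modK (a : 'I_v) s : s <= v -> add_mod (sub_mod a s) s = a.
Proof.
move=> s_le_v; apply/val_inj => /=.
by rewrite modnDml subnK ?modnDr ?modn_small // (leq_trans s_le_v (leq_addl _ _)).
Qed.

Definition label_row (p : label) (c : 'I_4) : 'I_v :=
  let: (s, a0, a1, a2) := p in
  match val c with 0 => a0 | 1 => a1 | 2 => a2 | _ => add_mod a0 s end.

Definition design : 'M['I_v]_((d + 1) * v ^ 3, 4) :=
  \matrix_(r, c) label_row (label_of_row r) c.

(* Distinct labels give distinct rows, since shifts s < d + 1 <= v
   are distinct modulo v. *)
Lemma label_row_inj (p q : label) : (forall c, label_row p c = label_row q c) -> p = q.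
Proof.
case: p q => [[[s a0] a1] a2] [[[s' b0] b1] b2] pq.
have := pq (Ordinal (isT : 3 < 4)); have := pq (Ordinal (isT : 2 < 4)).
have := pq (Ordinal (isT : 1 < 4)); have := pq (Ordinal (isT : 0 < 4)).
move=> /= a0b0 a1b1 a2b2; subst b0 b1 b2 => /(congr1 val) /= /eqP.
rewrite eqn_modDl !modn_small => [/eqP ss'||]; last 2 first.
- exact: leq_trans (ltn_ord s') d_lt_v.
- exact: leq_trans (ltn_ord s) d_lt_v.
by rewrite (val_inj ss').
Qed.

Lemma design_rows_distinct r1 r2 :
  (forall c, design r1 c = design r2 c) -> r1 = r2.
Proof.
move=> same_row; apply: label_of_row_inj; apply: label_row_inj => c.
by have := same_row c; rewrite !mxE.
Qed.

(* For each shift s, the label of a row covering T: the row extends the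
   3-tuple of T to the left or right in the unique way with shift s. *)
Definition cover_label (T : cinter 4 3 v) (s : 'I_(d + 1)) : label :=
  let: (i, x) := T in
  let x0 := x (Ordinal (isT : 0 < 3)) in
  let x1 := x (Ordinal (isT : 1 < 3)) in
  let x2 := x (Ordinal (isT : 2 < 3)) in
  if val i == 0 then (s, x0, x1, x2) else (s, sub_mod x2 s, x0, x1).

Lemma cover_label_inj T : injective (cover_label T).
Proof. by case: T => i x s1 s2; rewrite /cover_label; case: ifP => _ []. Qed.

Lemma cover_label_covers T s : covers design (row_of_label (cover_label T s)) T.
Proof.
apply/forallP => j; apply/forallP => c; apply/implyP => /eqP cij.
rewrite mxE row_of_labelK.
case: T cij => [[[|[|i]] Hi] x]; case: j => [[|[|[|j]]] Hj];
  case: c => [[|[|[|[|c]]]] Hc] //= _.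
all: try by apply/eqP; congr (x _); apply/val_inj.
rewrite sub_modK; last exact: leq_trans (ltnW (ltn_ord s)) (leq_trans _ d_lt_v).
by apply/eqP; congr (x _); apply/val_inj.
Qed.

Lemma design_rho_big (T : cinter 4 3 v) : d < #|rho design T|.
Proof.
have covering_rows :
    [set row_of_label (cover_label T s) | s in 'I_(d + 1)] \subset rho design T.
  by apply/subsetP => _ /imsetP[s _ ->]; rewrite inE cover_label_covers.
apply: leq_trans (subset_leq_card covering_rows).
rewrite card_imset ?card_ord ?addn1 // => s1 s2.
by move/(can_inj row_of_labelK)/cover_label_inj.
Qed.

End Construction.

Theorem mainTheorem15 (v d : nat) (hv : 2 <= v) (hd : 0 < d) (hdv : d + 1 <= v) :
  exists A : 'M['I_v]_((d + 1) * v ^ 3, 4), is_optimum_CDA d 3 A.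
Proof.
exists (design v d); split=> //.
apply: cda_of_covering_numbers => // [T | T T'].
  exact: design_rho_big.
exact/rho_overlap_le1/design_rows_distinct.
Qed.
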